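(* Let $\mathfrak{R}$ be an alternative ring with a nontrivial idempotent $e_1$ and Peirce decomposition $\mathfrak{R}=\mathfrak{R}_{11}\oplus\mathfrak{R}_{12}\oplus\mathfrak{R}_{21}\oplus\mathfrak{R}_{22}$, satisfying: (i) if $a_{11}\in\mathfrak{R}_{11}$, $a_{22}\in\mathfrak{R}_{22}$ and $[a_{11}+a_{22},\mathfrak{R}_{12}]=0$, then $a_{11}+a_{22}\in\mathcal{Z}(\mathfrak{R})$; (ii) if $a_{11}\in\mathfrak{R}_{11}$, $a_{22}\in\mathfrak{R}_{22}$ and $[a_{11}+a_{22},\mathfrak{R}_{21}]=0$, then $a_{11}+a_{22}\in\mathcal{Z}(\mathfrak{R})$. Let $\mathcal{D}$ be a multiplicative Lie-type derivation of $\mathfrak{R}$. Then for any $i\neq j$ and any $a_{ij},b_{ij}\in\mathfrak{R}_{ij}$, $\mathcal{D}(a_{ij}+b_{ij})=\mathcal{D}(a_{ij})+\mathcal{D}(b_{ij})$.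
   Context: Rings are not assumed associative or unital. The associator is $(x,y,z)=(xy)z-x(yz)$; $\mathfrak{R}$ is alternative if $(x,x,y)=0=(y,x,x)$ for all $x,y$. $[x,y]=xy-yx$ and $\mathcal{Z}(\mathfrak{R})=\{r: [r,x]=0\ \forall x\in\mathfrak{R}\}$. Define $p_1(x)=x$, $p_n(x_1,\dots,x_n)=[p_{n-1}(x_1,\dots,x_{n-1}),x_n]$. For $n\ge2$, a (not necessarily additive) map $\mathcal{D}\colon\mathfrak{R}\to\mathfrak{R}$ is a multiplicative Lie $n$-derivation if $\mathcal{D}(p_n(x_1,\dots,x_n))=\sum_{i=1}^n p_n(x_1,\dots,\mathcal{D}(x_i),\dots,x_n)$ for all $x_i\in\mathfrak{R}$; a multiplicative Lie-type derivation is a multiplicative Lie $n$-derivation for some $n\ge2$. A nontrivial idempotent is $e_1\ne0$ with $e_1^2=e_1$ which is not a multiplicative identity. With $e_2a:=a-e_1a$, $ae_2:=a-ae_1$, set $\mathfrak{R}_{ij}=e_i\mathfrak{R}e_j$ ($i,j=1,2$), so $\mathfrak{R}=\bigoplus_{i,j}\mathfrak{R}_{ij}$. *)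

(* Non-associative, non-unital rings are modelled as a
   zmodType R together with a biadditive multiplication `mul`. *)
From HB Require Import structures.
From mathcomp Require Import all_boot all_order all_algebra.
Set Implicit Arguments. Unset Strict Implicit. Unset Printing Implicit Defensive.
Import GRing.Theory.
Local Open Scope ring_scope.

Definition nonassoc_ring (R : zmodType) (mul : R -> R -> R) : Prop :=
  left_distributive mul +%R /\ right_distributive mul +%R.

Section NA.
Variables (R : zmodType) (mul : R -> R -> R).

Definition assoc (x y z : R) : R := mul (mul x y) z - mul x (mul y z).

Definition alternative : Prop :=
  forall x y : R, assoc x x y = 0 /\ assoc y x x = 0.

Definition lie (x y : R) : R := mul x y - mul y x.

Definition center (r : R) : Prop := forall x : R, lie r x = 0.

Definition nontrivial_idempotent (e : R) : Prop :=
  e <> 0 /\ mul e e = e /\ ~ (forall x : R, mul e x = x /\ mul x e = x).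

Inductive pidx := P1 | P2.

(* e_i a, with e_2 a := a - e_1 a *)
Definition lmul_e (e : R) (i : pidx) (a : R) : R :=
  match i with P1 => mul e a | P2 => a - mul e a end.
(* a e_j, with a e_2 := a - a e_1 *)
Definition rmul_e (e : R) (j : pidx) (a : R) : R :=
  match j with P1 => mul a e | P2 => a - mul a e end.

Definition peirce (e : R) (i j : pidx) (a : R) : Prop :=
  exists x : R, a = rmul_e e j (lmul_e e i x).

(* p_1(x_1) = x_1, p_{k+1}(x_1..x_{k+1}) = [p_k(x_1..x_k), x_{k+1}];
   here the arguments are indexed from 0: pcomm k x = p_{k+1}(x 0, ..., x k). *)
Fixpoint pcomm (k : nat) (x : nat -> R) : R :=
  match k with
  | 0 => x 0%N
  | k'.+1 => lie (pcomm k' x) (x k)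
  end.

Definition pn (n : nat) (x : nat -> R) : R := pcomm n.-1 x.

Definition upd (x : nat -> R) (i : nat) (y : R) : nat -> R :=
  fun k => if k == i then y else x k.

Definition lie_n_derivation (n : nat) (D : R -> R) : Prop :=
  forall x : nat -> R,
    D (pn n x) = \sum_(i < n) pn n (upd x i (D (x i))).

Definition lie_type_derivation (D : R -> R) : Prop :=
  exists n : nat, (2 <= n)%N /\ lie_n_derivation n D.

End NA.

From mathcomp Require Import all_boot all_order all_algebra.
Set Implicit Arguments.
Unset Strict Implicit.
Unset Printing Implicit Defensive.
Import GRing.Theory.
Local Open Scope ring_scope.

(* Let f x = [x, e] (ad_e). The Peirce rules of an alternative ring make f act as -1 on R12, as 1 on
   R21 and as 0 on R11 + R22 = ker f, so f^3 = f. A Lie 2-derivation is a Lie 3-derivation, so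
   let D be a Lie n-derivation with n >= 3. As p_n is additive in each argument, the defect
   d(u, v) = D(u + v) - D u - D v satisfies
     D(p_n(.., u + v, ..)) = D(p_n(.., u, ..)) + D(p_n(.., v, ..)) + p_n(.., d(u, v), ..),
   and p_n(x, y, e, ..., e) = f^(n-2) [x, y]. If f a = 0 and b lies in R12 or R21, this identity
   with y = e puts d(a, b) in ker f, and then with y in R21 or R12 shows that d(a, b) satisfies
   the hypothesis of (ii) or (i), so it is central. Expanding D(p_n(u - e, e + v, e, ..., e)) in
   both slots thus makes D additive on f^(n-1) u + f^(n-2) [u, v] + f^(n-1) v; taking u, v in
   R12 or R21 gives additivity on R12 + R21, and from it on R12 and on R21. *)

Lemma addrI0 (V : zmodType) (x y : V) : x = x + y -> y = 0.
Proof. by move=> h; apply: (addrI x); rewrite addr0 -h. Qed.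

Section NonassocRing.
Variables (R : zmodType) (mul : R -> R -> R).
Hypothesis mul_biadd : nonassoc_ring mul.
Local Notation "x ⊙ y" := (mul x y) (at level 40, left associativity).
Local Notation "[ x , y ]" := (lie mul x y).

Lemma nmulDl x y z : (x + y) ⊙ z = x ⊙ z + y ⊙ z.
Proof. exact: mul_biadd.1. Qed.
Lemma nmulDr x y z : x ⊙ (y + z) = x ⊙ y + x ⊙ z.
Proof. exact: mul_biadd.2. Qed.
Lemma nmul0l x : 0 ⊙ x = 0.
Proof. by apply: (@addrI0 _ (0 ⊙ x)); rewrite -nmulDl addr0. Qed.
Lemma nmul0r x : x ⊙ 0 = 0.
Proof. by apply: (@addrI0 _ (x ⊙ 0)); rewrite -nmulDr addr0. Qed.
Lemma nmulNl x y : (- x) ⊙ y = - (x ⊙ y).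
Proof. by apply/eqP; rewrite -addr_eq0 -nmulDl addNr nmul0l. Qed.
Lemma nmulNr x y : x ⊙ (- y) = - (x ⊙ y).
Proof. by apply/eqP; rewrite -addr_eq0 -nmulDr addNr nmul0r. Qed.
Lemma nmulBl x y z : (x - y) ⊙ z = x ⊙ z - y ⊙ z.
Proof. by rewrite nmulDl nmulNl. Qed.
Lemma nmulBr x y z : x ⊙ (y - z) = x ⊙ y - x ⊙ z.
Proof. by rewrite nmulDr nmulNr. Qed.

Lemma assocDl x y u v : assoc mul (x + y) u v = assoc mul x u v + assoc mul y u v.
Proof. by rewrite /assoc !nmulDl opprD addrACA. Qed.
Lemma assocDm x y u v : assoc mul u (x + y) v = assoc mul u x v + assoc mul u y v.
Proof. by rewrite /assoc nmulDr !nmulDl nmulDr opprD addrACA. Qed.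
Lemma assocDr x y u v : assoc mul u v (x + y) = assoc mul u v x + assoc mul u v y.
Proof. by rewrite /assoc !nmulDr opprD addrACA. Qed.

Lemma lieC x y : [x, y] = - [y, x].
Proof. by rewrite /lie opprB. Qed.
Lemma lie_xx x : [x, x] = 0.
Proof. exact: subrr. Qed.
Lemma lieDl x y z : [x + y, z] = [x, z] + [y, z].
Proof. by rewrite /lie nmulDl nmulDr opprD addrACA. Qed.
Lemma lieDr x y z : [z, x + y] = [z, x] + [z, y].
Proof. by rewrite /lie nmulDl nmulDr opprD addrACA. Qed.
Lemma lieNl x y : [- x, y] = - [x, y].
Proof. by rewrite /lie nmulNl nmulNr opprB opprK addrC. Qed.
Lemma lieBl x y z : [x - y, z] = [x, z] - [y, z].
Proof. by rewrite lieDl lieNl. Qed.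
Lemma lie0l x : [0, x] = 0.
Proof. by rewrite /lie nmul0l nmul0r subrr. Qed.
Lemma lie0r x : [x, 0] = 0.
Proof. by rewrite lieC lie0l oppr0. Qed.

Lemma eq_pcomm k (x y : nat -> R) :
  (forall j, (j <= k)%N -> x j = y j) -> pcomm mul k x = pcomm mul k y.
Proof.
elim: k => [|k IH] h /=; first exact: h.
by rewrite IH ?h // => j hj; apply: h; apply: leqW.
Qed.

Lemma pcomm_upd_gt k w j z : (k < j)%N -> pcomm mul k (upd w j z) = pcomm mul k w.
Proof.
move=> hkj; apply: eq_pcomm => l hl; rewrite /upd.
by case: eqP => // El; move: hl; rewrite El leqNgt hkj.
Qed.

Lemma pcomm_updD k w j u v : (j <= k)%N ->
  pcomm mul k (upd w j (u + v)) = pcomm mul k (upd w j u) + pcomm mul k (upd w j v).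
Proof.
elim: k => [|k IH] hj /=.
  by move: hj; rewrite leqn0 => /eqP ->; rewrite /upd eqxx.
case: (ltngtP j k.+1) hj => // [hjk | ->] _.
  by rewrite IH // lieDl /upd gtn_eqF.
by rewrite !pcomm_upd_gt // /upd eqxx lieDr.
Qed.

Definition add_defect (D : R -> R) u v := D (u + v) - D u - D v.

Lemma add_defectE (D : R -> R) u v : D (u + v) = D u + D v + add_defect D u v.
Proof. by rewrite /add_defect -[_ - D u - D v]addrA -opprD subrKC. Qed.

Lemma add_defectC (D : R -> R) u v : add_defect D u v = add_defect D v u.
Proof. by rewrite /add_defect [v + u]addrC addrAC. Qed.

Lemma lie_derivation_updD n (D : R -> R) w j u v :
  lie_n_derivation mul n D -> (j < n)%N ->
  D (pn mul n (upd w j (u + v))) =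
  D (pn mul n (upd w j u)) + D (pn mul n (upd w j v)) + pn mul n (upd w j (add_defect D u v)).
Proof.
move=> HD hjn; have hj : (j <= n.-1)%N by rewrite -ltnS (ltn_predK hjn).
have slot (i : 'I_n) : pn mul n (upd (upd w j (u + v)) i (D (upd w j (u + v) i))) =
    pn mul n (upd (upd w j u) i (D (upd w j u i))) +
    pn mul n (upd (upd w j v) i (D (upd w j v i))) +
    (if (i : nat) == j then pn mul n (upd w j (add_defect D u v)) else 0).
  case: eqP => [-> | /eqP Nij].
    have E z y : pn mul n (upd (upd w j z) j y) = pn mul n (upd w j y).
      by apply: eq_pcomm => l _; rewrite /upd; case: (l == j).
    by rewrite !E /upd eqxx -!pcomm_updD // -add_defectE.
  have E z : pn mul n (upd (upd w j z) i (D (upd w j z i))) =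
             pn mul n (upd (upd w i (D (w i))) j z).
    apply: eq_pcomm => l _; rewrite /upd (negbTE Nij).
    by case: (l =P i) => [->|]; rewrite ?(negbTE Nij) //; case: (l == j).
  by rewrite !E /pn pcomm_updD // addr0.
rewrite !HD (eq_bigr _ (fun i _ => slot i)) !big_split /= -big_mkcond /=.
by congr (_ + _); rewrite (big_pred1 (Ordinal hjn)).
Qed.

Lemma lie_derivation2_3 (D : R -> R) :
  lie_n_derivation mul 2 D -> lie_n_derivation mul 3 D.
Proof.
move=> H.
have HD2 u v : D [u, v] = [D u, v] + [u, D v].
  have := H (fun j => if j == 0%N then u else v).
  by rewrite /pn /= !big_ord_recl big_ord0 /= /upd /= addr0.
move=> x; rewrite /pn /= !big_ord_recl big_ord0 /= /upd /= addr0.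
by rewrite /bump /= !addn0 HD2 HD2 lieDl -addrA.
Qed.

Section Peirce.
Hypothesis mul_alt : alternative mul.
Variable e : R.
Hypothesis e_idem : e ⊙ e = e.
Local Notation A := (assoc mul).

Lemma assoc_swapl x y z : A x y z = - A y x z.
Proof.
have := (mul_alt (x + y) z).1.
rewrite assocDl !assocDm (mul_alt x z).1 (mul_alt y z).1 add0r addr0.
by move/eqP; rewrite addr_eq0 => /eqP.
Qed.

Lemma assoc_swapr x y z : A x y z = - A x z y.
Proof.
have := (mul_alt (y + z) x).2.
rewrite assocDr !assocDm (mul_alt y x).2 (mul_alt z x).2 add0r addr0.
by move/eqP; rewrite addrC addr_eq0 => /eqP.
Qed.

Lemma assoc_cycle x y z : A x y z = A y z x.
Proof. by rewrite assoc_swapl assoc_swapr opprK. Qed.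

Lemma mulA_assoc x y z : (x ⊙ y) ⊙ z = x ⊙ (y ⊙ z) + A x y z.
Proof. by rewrite /assoc addrC subrK. Qed.

Lemma mulA_subassoc x y z : x ⊙ (y ⊙ z) = (x ⊙ y) ⊙ z - A x y z.
Proof. by rewrite /assoc opprB addrC subrK. Qed.

Lemma idem_mulKl x : e ⊙ (e ⊙ x) = e ⊙ x.
Proof. by rewrite mulA_subassoc (mul_alt e x).1 subr0 e_idem. Qed.

Lemma idem_mulKr x : (x ⊙ e) ⊙ e = x ⊙ e.
Proof. by rewrite mulA_assoc (mul_alt e x).2 addr0 e_idem. Qed.

Lemma idem_flexible x : (e ⊙ x) ⊙ e = e ⊙ (x ⊙ e).
Proof. by rewrite mulA_assoc assoc_swapr (mul_alt e x).1 oppr0 addr0. Qed.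

Definition is11 x := e ⊙ x = x /\ x ⊙ e = x.
Definition is12 x := e ⊙ x = x /\ x ⊙ e = 0.
Definition is21 x := e ⊙ x = 0 /\ x ⊙ e = x.
Definition is22 x := e ⊙ x = 0 /\ x ⊙ e = 0.

Lemma is12_peirce x : peirce mul e P1 P2 x -> is12 x.
Proof.
case=> y ->; split; first by rewrite /= nmulBr idem_mulKl -idem_flexible idem_mulKl.
by rewrite /= nmulBl idem_mulKr subrr.
Qed.

Lemma is21_peirce x : peirce mul e P2 P1 x -> is21 x.
Proof.
case=> y ->; split; last by rewrite /= idem_mulKr.
by rewrite /= -idem_flexible nmulBr idem_mulKl subrr nmul0l.
Qed.

Lemma peirce_is11 x : is11 x -> peirce mul e P1 P1 x.
Proof. by move=> [h1 h2]; exists x; rewrite /= h1 h2. Qed.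

Lemma peirce_is22 x : is22 x -> peirce mul e P2 P2 x.
Proof. by move=> [h1 h2]; exists x; rewrite /= h1 !subr0 h2 subr0. Qed.

Lemma is12N x : is12 x -> is12 (- x).
Proof. by move=> [h1 h2]; rewrite /is12 nmulNl nmulNr h1 h2 oppr0. Qed.
Lemma is21N x : is21 x -> is21 (- x).
Proof. by move=> [h1 h2]; rewrite /is21 nmulNl nmulNr h1 h2 oppr0. Qed.
Lemma is12D x y : is12 x -> is12 y -> is12 (x + y).
Proof. by move=> [h1 h2] [h3 h4]; rewrite /is12 nmulDl nmulDr h1 h2 h3 h4 addr0. Qed.
Lemma is21D x y : is21 x -> is21 y -> is21 (x + y).
Proof. by move=> [h1 h2] [h3 h4]; rewrite /is21 nmulDl nmulDr h1 h2 h3 h4 addr0. Qed.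

Lemma mul11_12 x c : is11 x -> is12 c -> is12 (x ⊙ c).
Proof.
move=> [x1 x2] [c1 c2].
have h : A e x c = 0 by rewrite assoc_swapl /assoc x2 c1 subrr oppr0.
split; first by rewrite mulA_subassoc x1 h subr0.
by rewrite mulA_assoc c2 nmul0r add0r assoc_swapr -assoc_swapl h.
Qed.

Lemma mul12_11 c x : is12 c -> is11 x -> c ⊙ x = 0.
Proof.
move=> [c1 c2] [x1 x2].
have : A c x e = 0 by rewrite assoc_cycle /assoc x2 c1 subrr.
by rewrite assoc_swapr /assoc c2 nmul0l x1 sub0r !opprK.
Qed.

Lemma mul22_12 x c : is22 x -> is12 c -> x ⊙ c = 0.
Proof.
move=> [x1 x2] [c1 c2].
have : A e x c = 0 by rewrite -assoc_cycle /assoc c2 x1 nmul0l nmul0r subrr.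
by rewrite assoc_swapl /assoc x2 c1 nmul0l sub0r !opprK.
Qed.

Lemma mul12_22 c x : is12 c -> is22 x -> is12 (c ⊙ x).
Proof.
move=> [c1 c2] [x1 x2].
have h : A e c x = 0.
  by rewrite assoc_swapr -assoc_cycle /assoc c2 x1 nmul0l nmul0r subrr oppr0.
split; first by rewrite mulA_subassoc c1 h subr0.
by rewrite mulA_assoc x2 nmul0r add0r -assoc_cycle h.
Qed.

Lemma mul11_21 x c : is11 x -> is21 c -> x ⊙ c = 0.
Proof.
move=> [x1 x2] [c1 c2].
have : A x c e = 0 by rewrite assoc_cycle /assoc c2 x1 subrr.
by rewrite assoc_swapr /assoc x2 c1 nmul0r subr0 => /eqP; rewrite oppr_eq0 => /eqP.
Qed.

Lemma mul21_11 c x : is21 c -> is11 x -> is21 (c ⊙ x).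
Proof.
move=> hc hx; case: (hc) (hx) => [c1 c2] [x1 x2].
have h : A e c x = 0.
  by rewrite -assoc_cycle /assoc x2 c1 nmul0r subr0 (mul11_21 hx hc).
split; first by rewrite mulA_subassoc c1 nmul0l h subr0.
by rewrite mulA_assoc x2 -assoc_cycle h addr0.
Qed.

Lemma mul22_21 x c : is22 x -> is21 c -> is21 (x ⊙ c).
Proof.
move=> [x1 x2] [c1 c2].
have h : A e x c = 0.
  by rewrite assoc_swapl /assoc x2 c1 nmul0l nmul0r subrr oppr0.
split; first by rewrite mulA_subassoc x1 nmul0l h subrr.
by rewrite mulA_assoc c2 -assoc_cycle h addr0.
Qed.

Lemma mul21_22 c x : is21 c -> is22 x -> c ⊙ x = 0.
Proof.
move=> [c1 c2] [x1 x2].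
have : A c x e = 0 by rewrite assoc_cycle /assoc x2 c1 nmul0l nmul0r subrr.
by rewrite assoc_swapr /assoc c2 x1 nmul0r subr0 => /eqP; rewrite oppr_eq0 => /eqP.
Qed.

Lemma mul21_12 b c : is21 b -> is12 c -> is22 (b ⊙ c).
Proof.
move=> [b1 b2] [c1 c2].
have h : A e b c = 0 by rewrite assoc_swapl /assoc b2 c1 subrr oppr0.
split; first by rewrite mulA_subassoc b1 nmul0l h subrr.
by rewrite mulA_assoc c2 nmul0r add0r -assoc_cycle h.
Qed.

Lemma mul12_21 c b : is12 c -> is21 b -> is11 (c ⊙ b).
Proof.
move=> [c1 c2] [b1 b2].
have h : A e c b = 0 by rewrite assoc_swapl /assoc c2 b1 nmul0l nmul0r subrr oppr0.
split; first by rewrite mulA_subassoc c1 h subr0.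
by rewrite mulA_assoc b2 -assoc_cycle h addr0.
Qed.

Lemma mul12_12 a b : is12 a -> is12 b -> is21 (a ⊙ b).
Proof.
move=> [a1 a2] [b1 b2].
have h : A e a b = a ⊙ b by rewrite assoc_swapl /assoc a2 b1 nmul0l sub0r opprK.
split; first by rewrite mulA_subassoc a1 h subrr.
by rewrite mulA_assoc b2 nmul0r add0r -assoc_cycle h.
Qed.

Lemma mul21_21 a b : is21 a -> is21 b -> is12 (a ⊙ b).
Proof.
move=> [a1 a2] [b1 b2].
have h : A e a b = - (a ⊙ b) by rewrite assoc_swapl /assoc a2 b1 nmul0r subr0.
split; first by rewrite mulA_subassoc a1 nmul0l h sub0r opprK.
by rewrite mulA_assoc b2 -assoc_cycle h subrr.
Qed.

Definition ad_e x := [x, e].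

Lemma ad_eD x y : ad_e (x + y) = ad_e x + ad_e y. Proof. exact: lieDl. Qed.
Lemma ad_eN x : ad_e (- x) = - ad_e x. Proof. exact: lieNl. Qed.
Lemma ad_eB x y : ad_e (x - y) = ad_e x - ad_e y. Proof. exact: lieBl. Qed.
Lemma ad_e0 : ad_e 0 = 0. Proof. exact: lie0l. Qed.

Lemma ad_e12 x : is12 x -> ad_e x = - x.
Proof. by move=> [h1 h2]; rewrite /ad_e /lie h1 h2 sub0r. Qed.
Lemma ad_e21 x : is21 x -> ad_e x = x.
Proof. by move=> [h1 h2]; rewrite /ad_e /lie h1 h2 subr0. Qed.
Lemma ad_e11 x : is11 x -> ad_e x = 0.
Proof. by move=> [h1 h2]; rewrite /ad_e /lie h1 h2 subrr. Qed.
Lemma ad_e22 x : is22 x -> ad_e x = 0.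
Proof. by move=> [h1 h2]; rewrite /ad_e /lie h1 h2 subrr. Qed.

Lemma ad_e3 x : ad_e (ad_e (ad_e x)) = ad_e x.
Proof.
have h1 : ad_e (x ⊙ e) = x ⊙ e - (e ⊙ x) ⊙ e by rewrite /ad_e /lie idem_mulKr idem_flexible.
have h2 : ad_e (e ⊙ x) = (e ⊙ x) ⊙ e - e ⊙ x by rewrite /ad_e /lie idem_mulKl.
have h3 : ad_e ((e ⊙ x) ⊙ e) = 0.
  by rewrite /ad_e /lie idem_mulKr -idem_flexible idem_mulKl subrr.
have h4 : ad_e (ad_e x) = (x ⊙ e - (e ⊙ x) ⊙ e) - ((e ⊙ x) ⊙ e - e ⊙ x).
  by rewrite {2}/ad_e /lie ad_eB h1 h2.
by rewrite h4 !ad_eB h1 h2 h3 subr0 sub0r opprK addrA subrK.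
Qed.

Lemma iter_ad_eD n x y : iter n ad_e (x + y) = iter n ad_e x + iter n ad_e y.
Proof. by elim: n => [|n IH] //=; rewrite IH ad_eD. Qed.

Lemma iter_ad_e0 n : iter n ad_e 0 = 0.
Proof. by elim: n => [|n IH] //=; rewrite IH ad_e0. Qed.

Lemma iter_ad_e_ker n x : ad_e x = 0 -> iter n.+1 ad_e x = 0.
Proof. by move=> h; elim: n => [|n IH] //; rewrite iterS IH ad_e0. Qed.

Lemma iter_ad_e_eq0 n x : iter n.+1 ad_e x = 0 -> ad_e x = 0.
Proof.
have [] : iter n.+1 ad_e x = ad_e x \/ iter n.+1 ad_e x = ad_e (ad_e x).
  elim: n => [|n [IH|IH]]; first by left.
    by right; rewrite iterS IH.
  by left; rewrite iterS IH ad_e3.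
by move=> ->.
by move=> -> h; rewrite -ad_e3 h ad_e0.
Qed.

Lemma iter_ad_e21 n x : is21 x -> iter n ad_e x = x.
Proof. by move=> h; elim: n => [|n IH] //=; rewrite IH ad_e21. Qed.

Lemma is12_iter_ad_e n x : is12 x -> is12 (iter n ad_e x).
Proof. by move=> h; elim: n => [|n IH] //=; rewrite (ad_e12 IH); apply: is12N. Qed.

Lemma iter_ad_e12_double n x : is12 x -> iter (n + n) ad_e x = x.
Proof.
move=> h; elim: n => [|n IH] //.
by rewrite addSn addnS !iterS IH (ad_e12 h) (ad_e12 (is12N h)) opprK.
Qed.

Lemma ker_ad_e_peirce u : ad_e u = 0 -> is11 (e ⊙ u) /\ is22 (u - e ⊙ u).
Proof.
move=> /eqP; rewrite subr_eq0 => /eqP hu.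
have h1 : (e ⊙ u) ⊙ e = e ⊙ u by rewrite -hu idem_mulKr.
split; first by split; rewrite ?idem_mulKl.
split; first by rewrite nmulBr idem_mulKl subrr.
by rewrite nmulBl h1 hu subrr.
Qed.

Lemma lie_ker_ad_e12 u c : ad_e u = 0 -> is12 c -> is12 [u, c].
Proof.
move=> /ker_ad_e_peirce [h11 h22] hc; rewrite -(subrKC (e ⊙ u) u) lieDl /lie.
rewrite (mul12_11 hc h11) (mul22_12 h22 hc) subr0 add0r.
by apply: is12D; [apply: mul11_12 | apply/is12N/mul12_22].
Qed.

Lemma lie_ker_ad_e21 u c : ad_e u = 0 -> is21 c -> is21 [u, c].
Proof.
move=> /ker_ad_e_peirce [h11 h22] hc; rewrite -(subrKC (e ⊙ u) u) lieDl /lie.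
rewrite (mul11_21 h11 hc) (mul21_22 hc h22) subr0 add0r.
by apply: is21D; [apply/is21N/mul21_11 | apply: mul22_21].
Qed.

Lemma ad_e_lie21_12 b c : is21 b -> is12 c -> ad_e [b, c] = 0.
Proof.
by move=> hb hc; rewrite /lie ad_eB (ad_e22 (mul21_12 hb hc)) (ad_e11 (mul12_21 hc hb)) subrr.
Qed.

Lemma ad_e_lie12_21 b c : is12 b -> is21 c -> ad_e [b, c] = 0.
Proof. by move=> hb hc; rewrite lieC ad_eN ad_e_lie21_12 ?oppr0. Qed.

Lemma lie12_12 a b : is12 a -> is12 b -> is21 [a, b].
Proof. by move=> ha hb; apply: is21D; [apply: mul12_12 | apply/is21N/mul12_12]. Qed.

Lemma lie21_21 a b : is21 a -> is21 b -> is12 [a, b].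
Proof. by move=> ha hb; apply: is12D; [apply: mul21_21 | apply/is12N/mul21_21]. Qed.

Lemma lieNe x : [- e, x] = ad_e x.
Proof. by rewrite lieNl -lieC. Qed.

Definition lie_seq x y : nat -> R :=
  fun j => if j == 0%N then x else if j == 1%N then y else e.

Lemma pcomm_lie_seq n x y : pcomm mul n.+1 (lie_seq x y) = iter n ad_e [x, y].
Proof. by elim: n => [|n IH] //; rewrite iterS -IH. Qed.

Lemma upd_lie_seq0 x y z : upd (lie_seq x y) 0 z =1 lie_seq z y.
Proof. by move=> j; rewrite /upd /lie_seq; case: (j == 0%N). Qed.

Lemma upd_lie_seq1 x y z : upd (lie_seq x y) 1 z =1 lie_seq x z.
Proof. by move=> j; rewrite /upd /lie_seq; case: eqP => [->|]. Qed.

Section LieTypeDerivation.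
Variables (D : R -> R) (k : nat).
Hypothesis D_der : lie_n_derivation mul k.+3 D.
Hypothesis center12 : forall a11 a22 : R,
  peirce mul e P1 P1 a11 -> peirce mul e P2 P2 a22 ->
  (forall x : R, peirce mul e P1 P2 x -> [a11 + a22, x] = 0) -> center mul (a11 + a22).
Hypothesis center21 : forall a11 a22 : R,
  peirce mul e P1 P1 a11 -> peirce mul e P2 P2 a22 ->
  (forall x : R, peirce mul e P2 P1 x -> [a11 + a22, x] = 0) -> center mul (a11 + a22).

Local Notation F := (iter k.+1 ad_e).
Local Notation G := (iter k.+2 ad_e).
Local Notation δ := (add_defect D).

Lemma pn_upd_lie_seq0 x y z : pn mul k.+3 (upd (lie_seq x y) 0 z) = F [z, y].
Proof. by rewrite -pcomm_lie_seq; apply: eq_pcomm => j _; apply: upd_lie_seq0. Qed.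

Lemma pn_upd_lie_seq1 x y z : pn mul k.+3 (upd (lie_seq x y) 1 z) = F [x, z].
Proof. by rewrite -pcomm_lie_seq; apply: eq_pcomm => j _; apply: upd_lie_seq1. Qed.

Lemma D_F_lieDl u v y : D (F [u + v, y]) = D (F [u, y]) + D (F [v, y]) + F [δ u v, y].
Proof.
have := lie_derivation_updD (lie_seq 0 y) u v D_der (isT : 0 < k.+3)%N.
by rewrite !pn_upd_lie_seq0.
Qed.

Lemma D_F_lieDr x u v : D (F [x, u + v]) = D (F [x, u]) + D (F [x, v]) + F [x, δ u v].
Proof.
have := lie_derivation_updD (lie_seq x 0) u v D_der (isT : 1 < k.+3)%N.
by rewrite !pn_upd_lie_seq1.
Qed.

Lemma D0 : D 0 = 0.
Proof. by have := D_F_lieDl 0 0 0; rewrite !lie0r iter_ad_e0 addr0 => /addrI0. Qed.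

Lemma F_ad_e x : F (ad_e x) = G x.
Proof. by rewrite [RHS]iterSr. Qed.

Lemma ad_ee : ad_e e = 0.
Proof. exact: lie_xx. Qed.

Lemma ad_eNe : ad_e (- e) = 0.
Proof. by rewrite ad_eN ad_ee oppr0. Qed.

Lemma defect_center a b : ad_e a = 0 -> is12 b \/ is21 b -> center mul (δ a b).
Proof.
move=> ha hb; set d := δ a b.
have d_ker : ad_e d = 0.
  have := D_F_lieDl a b e; rewrite lieDl -/(ad_e a) ha add0r iter_ad_e0 D0 add0r.
  by move=> /addrI0; rewrite F_ad_e => /iter_ad_e_eq0.
have [d11 d22] := ker_ad_e_peirce d_ker.
have d_lie x : ad_e [b, x] = 0 -> ad_e [d, x] = 0.
  move=> /(iter_ad_e_ker k) hbx; have := D_F_lieDl a b x.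
  by rewrite lieDl iter_ad_eD hbx addr0 D0 addr0 => /addrI0 /iter_ad_e_eq0.
rewrite -(subrKC (e ⊙ d) d).
case: hb => hb.
- apply: center21 => [|| x /is21_peirce hx]; [exact: peirce_is11 d11 | exact: peirce_is22 d22 |].
  rewrite subrKC -(ad_e21 (lie_ker_ad_e21 d_ker hx)).
  exact/d_lie/ad_e_lie12_21.
- apply: center12 => [|| x /is12_peirce hx]; [exact: peirce_is11 d11 | exact: peirce_is22 d22 |].
  rewrite subrKC -[LHS]opprK -(ad_e12 (lie_ker_ad_e12 d_ker hx)) d_lie ?oppr0 //.
  exact: ad_e_lie21_12.
Qed.

(* Expand D (p(u - e, e + v, e, ..., e)) in both slots; every defect is central. *)
Lemma D_add_expansion u v : is12 u \/ is21 u -> is12 v \/ is21 v ->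
  D (G u + F [u, v] + G v) = D (G u) + D (F [u, v]) + D (G v).
Proof.
move=> hu hv.
have Fe0 : F [- e, e] = 0 by rewrite lieNe ad_ee iter_ad_e0.
have <- : F [u - e, e + v] = G u + F [u, v] + G v.
  rewrite lieDl !lieDr (iter_ad_eD _ ([u, e] + _)) !(iter_ad_eD _ [_, e]).
  by rewrite Fe0 add0r lieNe !F_ad_e.
have δNe := defect_center ad_eNe hu; have δe := defect_center ad_ee hv.
rewrite (D_F_lieDl u (- e)) add_defectC δNe iter_ad_e0 addr0.
rewrite !D_F_lieDr !(lieC _ (δ e v)) !δe oppr0 iter_ad_e0 !addr0 Fe0 D0 add0r.
by rewrite lieNe !F_ad_e.
Qed.

Lemma G_is12 x : is12 x -> is12 (G x).
Proof. exact: is12_iter_ad_e. Qed.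

Lemma GK x : is12 x -> G (G x) = x.
Proof. by move=> hx; rewrite -iterD iter_ad_e12_double. Qed.

Lemma D_add12_21 x y : is12 x -> is21 y -> D (x + y) = D x + D y.
Proof.
move=> hx hy; rewrite -(GK hx).
have := D_add_expansion (or_introl (G_is12 hx)) (or_intror hy).
by rewrite (iter_ad_e_ker k (ad_e_lie12_21 (G_is12 hx) hy)) D0 !addr0 (iter_ad_e21 _ hy).
Qed.

Lemma D_add12 a b : is12 a -> is12 b -> D (a + b) = D a + D b.
Proof.
move=> ha hb; have hab := lie12_12 (G_is12 ha) (G_is12 hb).
have := D_add_expansion (or_introl (G_is12 ha)) (or_introl (G_is12 hb)).
rewrite !GK // (iter_ad_e21 _ hab) addrAC (D_add12_21 (is12D ha hb) hab) => E.
by apply: (addIr (D [G a, G b])); rewrite E addrAC.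
Qed.

Lemma D_add21 a b : is21 a -> is21 b -> D (a + b) = D a + D b.
Proof.
move=> ha hb; have hab := is12_iter_ad_e k.+1 (lie21_21 ha hb).
have := D_add_expansion (or_intror ha) (or_intror hb).
rewrite !(iter_ad_e21 _ ha) !(iter_ad_e21 _ hb) addrAC addrC (D_add12_21 hab (is21D ha hb)) => E.
by apply: (addrI (D (F [a, b]))); rewrite E addrAC addrC.
Qed.

End LieTypeDerivation.
End Peirce.
End NonassocRing.

Theorem lemma2p4 (R : zmodType) (mul : R -> R -> R) (e1 : R) (D : R -> R) :
  nonassoc_ring mul ->
  alternative mul ->
  nontrivial_idempotent mul e1 ->
  (* (i) *)
  (forall a11 a22 : R, peirce mul e1 P1 P1 a11 -> peirce mul e1 P2 P2 a22 ->
     (forall x : R, peirce mul e1 P1 P2 x -> lie mul (a11 + a22) x = 0) ->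
     center mul (a11 + a22)) ->
  (* (ii) *)
  (forall a11 a22 : R, peirce mul e1 P1 P1 a11 -> peirce mul e1 P2 P2 a22 ->
     (forall x : R, peirce mul e1 P2 P1 x -> lie mul (a11 + a22) x = 0) ->
     center mul (a11 + a22)) ->
  lie_type_derivation mul D ->
  forall (i j : pidx) (a b : R), i <> j ->
    peirce mul e1 i j a -> peirce mul e1 i j b ->
    D (a + b) = D a + D b.
Proof.
move=> biadd alt [_ [idem _]] center12 center21 [n [n_ge2 D_der]].
have [k Dk_der] : exists k, lie_n_derivation mul k.+3 D.
  case: n n_ge2 D_der => [|[|[|k]]] // _ D_der; last by exists k.
  by exists 0%N; exact: lie_derivation2_3.
case=> [] [] // a b _ ha hb.
- exact: (D_add12 biadd alt idem Dk_der center12 center21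
                  (is12_peirce biadd alt idem ha) (is12_peirce biadd alt idem hb)).
- exact: (D_add21 biadd alt idem Dk_der center12 center21
                  (is21_peirce biadd alt idem ha) (is21_peirce biadd alt idem hb)).
Qed.
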